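(* Let $R_e\approx1.4877$ be the unique positive root of $\frac{10}{7(R+1)}-\frac{R^2\sqrt{R}}{R^2+R+1}=0$. Then for all $0<x,y,z<R_e$, $$-\tfrac{10}{7}\sqrt{y}\,d_1(y,z)-\sqrt{yz}\,d_2(y,z)-\sqrt{xy}\,d_2(x,y)>0 .$$
   Context: For $x,y\ge0$: $d_1(x,y)=-\frac{x}{1+x}-\frac{xy}{1+y+xy}-\frac{xy^2}{1+y+xy}\frac{1+x}{1+y}$ and $d_2(x,y)=\frac{xy^2}{1+y+xy}\frac{1+x}{1+y}$. *)

From Stdlib Require Import Reals.
Open Scope R_scope.

Definition d_1 (x y : R) : R :=
  - (x / (1 + x)) - (x * y) / (1 + y + x * y)
  - (x * y ^ 2) / (1 + y + x * y) * ((1 + x) / (1 + y)).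

Definition d_2 (x y : R) : R :=
  (x * y ^ 2) / (1 + y + x * y) * ((1 + x) / (1 + y)).

Definition fRe (r : R) : R :=
  10 / (7 * (r + 1)) - (r ^ 2 * sqrt r) / (r ^ 2 + r + 1).

(** Write [k = 10/7] and [g = d_2_kernel], so that
    [d_2 x y = y/(1+y) * g x y] and [d_1 y z = - y/(1+y) - y z/(1+z+y z) - d_2 y z].
    The left-hand side then equals
    [sqrt y * (y/(1+y) * (k - sqrt x * g x y) + k * y z/(1+z+y z) + (k - sqrt z) * d_2 y z)].
    Since [g] is increasing in both arguments, [sqrt x * g x y < sqrt R_e * g R_e R_e],
    and the root equation says exactly that the right-hand side is [k]; it also forces
    [sqrt R_e < k].  All three summands are then nonnegative, the first one positive. *)

From Stdlib Require Import Reals Lra Psatz.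
Open Scope R_scope.

Lemma Rdiv_lt_cross (a b c d : R) :
  0 < b -> 0 < d -> a * d < c * b -> a / b < c / d.
Proof.
  intros Hb Hd Hlt.
  apply Rmult_lt_reg_r with (b * d); [nra|].
  replace (a / b * (b * d)) with (a * d) by (field; lra).
  replace (c / d * (b * d)) with (c * b) by (field; lra).
  exact Hlt.
Qed.

Definition d_2_kernel (x y : R) : R := x * y * (1 + x) / (1 + y + x * y).

Lemma d_2_kernel_pos (x y : R) : 0 < x -> 0 < y -> 0 < d_2_kernel x y.
Proof. intros Hx Hy. unfold d_2_kernel. apply Rdiv_lt_0_compat; nra. Qed.

Lemma d_2_kernel_lt_l (x x' y : R) :
  0 < x < x' -> 0 < y -> d_2_kernel x y < d_2_kernel x' y.
Proof.
  intros [Hx Hxx'] Hy. unfold d_2_kernel.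
  apply Rdiv_lt_cross; [nra | nra |].
  assert (Hsq : x * (1 + x) < x' * (1 + x')) by nra.
  assert (Hgap : x * (1 + x) * (1 + y + x' * y) < x' * (1 + x') * (1 + y + x * y)).
  { assert (Hid : x' * (1 + x') * (1 + y + x * y) - x * (1 + x) * (1 + y + x' * y)
                  = (1 + y) * (x' * (1 + x') - x * (1 + x)) + x * x' * y * (x' - x)) by ring.
    assert (0 < (1 + y) * (x' * (1 + x') - x * (1 + x))) by (apply Rmult_lt_0_compat; lra).
    assert (0 < x * x' * y * (x' - x)) by (repeat apply Rmult_lt_0_compat; lra).
    lra. }
  replace (x * y * (1 + x) * (1 + y + x' * y)) with (y * (x * (1 + x) * (1 + y + x' * y))) by ring.
  replace (x' * y * (1 + x') * (1 + y + x * y)) with (y * (x' * (1 + x') * (1 + y + x * y))) by ring.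
  apply Rmult_lt_compat_l; assumption.
Qed.

Lemma d_2_kernel_lt_r (x y y' : R) :
  0 < x -> 0 < y < y' -> d_2_kernel x y < d_2_kernel x y'.
Proof.
  intros Hx [Hy Hyy']. unfold d_2_kernel.
  apply Rdiv_lt_cross; [nra | nra |].
  replace (x * y * (1 + x) * (1 + y' + x * y'))
    with (x * (1 + x) * (y + y * y' * (1 + x))) by ring.
  replace (x * y' * (1 + x) * (1 + y + x * y))
    with (x * (1 + x) * (y' + y * y' * (1 + x))) by ring.
  apply Rmult_lt_compat_l; nra.
Qed.

Lemma d_2_kernel_lt (x x' y y' : R) :
  0 < x < x' -> 0 < y < y' -> d_2_kernel x y < d_2_kernel x' y'.
Proof.
  intros Hx Hy.
  apply Rlt_trans with (d_2_kernel x' y).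
  - apply d_2_kernel_lt_l; lra.
  - apply d_2_kernel_lt_r; lra.
Qed.

Lemma one_lt_d_2_kernel_diag (r : R) : 2 <= r -> 1 < d_2_kernel r r.
Proof.
  intros Hr. unfold d_2_kernel.
  apply Rmult_lt_reg_r with (1 + r + r * r); [nra|].
  unfold Rdiv. rewrite Rmult_1_l, Rmult_assoc, Rinv_l by nra.
  nra.
Qed.

Lemma d_2_eq_mul_kernel (x y : R) :
  0 < x -> 0 < y -> d_2 x y = y / (1 + y) * d_2_kernel x y.
Proof. intros Hx Hy. unfold d_2, d_2_kernel. field. nra. Qed.

Lemma d_2_pos (x y : R) : 0 < x -> 0 < y -> 0 < d_2 x y.
Proof.
  intros Hx Hy. rewrite d_2_eq_mul_kernel by assumption.
  apply Rmult_lt_0_compat; [apply Rdiv_lt_0_compat; lra | apply d_2_kernel_pos; assumption].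
Qed.

Lemma fRe_root_sqrt_mul_kernel (r : R) :
  0 < r -> fRe r = 0 -> sqrt r * d_2_kernel r r = 10 / 7.
Proof.
  intros Hr Hroot. unfold fRe in Hroot. unfold d_2_kernel.
  replace (sqrt r * (r * r * (1 + r) / (1 + r + r * r)))
    with (r ^ 2 * sqrt r / (r ^ 2 + r + 1) * (r + 1)) by (field; nra).
  replace (r ^ 2 * sqrt r / (r ^ 2 + r + 1)) with (10 / (7 * (r + 1))) by lra.
  field. lra.
Qed.

Lemma fRe_root_sqrt_lt (r : R) : 0 < r -> fRe r = 0 -> sqrt r < 10 / 7.
Proof.
  intros Hr Hroot.
  destruct (Rlt_or_le (sqrt r) (10 / 7)) as [Hlt | Hge]; [exact Hlt | exfalso].
  assert (Hr2 : 2 <= r).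
  { rewrite <- (sqrt_sqrt r) by lra. nra. }
  pose proof (one_lt_d_2_kernel_diag r Hr2) as Hk.
  pose proof (fRe_root_sqrt_mul_kernel r Hr Hroot) as Heq.
  nra.
Qed.

Lemma sqrt_mul_d_2_kernel_lt (r x y : R) :
  0 < r -> fRe r = 0 -> 0 < x < r -> 0 < y < r ->
  sqrt x * d_2_kernel x y < 10 / 7.
Proof.
  intros Hr Hroot Hx Hy.
  rewrite <- (fRe_root_sqrt_mul_kernel r Hr Hroot).
  apply Rmult_le_0_lt_compat.
  - apply sqrt_pos.
  - apply Rlt_le, d_2_kernel_pos; lra.
  - apply sqrt_lt_1_alt; lra.
  - apply d_2_kernel_lt; assumption.
Qed.

Lemma lemmaA1_lhs_eq (x y z : R) :
  0 < x -> 0 < y -> 0 < z ->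
  - (10 / 7) * sqrt y * d_1 y z - sqrt (y * z) * d_2 y z - sqrt (x * y) * d_2 x y
  = sqrt y * (y / (1 + y) * (10 / 7 - sqrt x * d_2_kernel x y)
              + 10 / 7 * (y * z / (1 + z + y * z))
              + (10 / 7 - sqrt z) * d_2 y z).
Proof.
  intros Hx Hy Hz.
  change (d_1 y z) with (- (y / (1 + y)) - y * z / (1 + z + y * z) - d_2 y z).
  rewrite (d_2_eq_mul_kernel x y), !sqrt_mult by lra.
  ring.
Qed.

Theorem lemmaA1 (Re : R)
  (HRe_pos : 0 < Re) (HRe_root : fRe Re = 0)
  (HRe_unique : forall r : R, 0 < r -> fRe r = 0 -> r = Re) :
  forall x y z : R, 0 < x < Re -> 0 < y < Re -> 0 < z < Re ->
    - (10 / 7) * sqrt y * d_1 y z - sqrt (y * z) * d_2 y z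
    - sqrt (x * y) * d_2 x y > 0.
Proof.
  intros x y z Hx Hy Hz.
  rewrite lemmaA1_lhs_eq by lra.
  assert (Hxy : 0 < 10 / 7 - sqrt x * d_2_kernel x y).
  { pose proof (sqrt_mul_d_2_kernel_lt Re x y HRe_pos HRe_root Hx Hy). lra. }
  assert (Hz7 : 0 <= 10 / 7 - sqrt z).
  { pose proof (sqrt_lt_1_alt z Re ltac:(lra)).
    pose proof (fRe_root_sqrt_lt Re HRe_pos HRe_root). lra. }
  assert (Hyz : 0 < y * z / (1 + z + y * z)) by (apply Rdiv_lt_0_compat; nra).
  assert (H1 : 0 < y / (1 + y) * (10 / 7 - sqrt x * d_2_kernel x y)).
  { apply Rmult_lt_0_compat; [apply Rdiv_lt_0_compat |]; lra. }
  assert (H3 : 0 <= (10 / 7 - sqrt z) * d_2 y z).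
  { apply Rmult_le_pos; [assumption | apply Rlt_le, d_2_pos; lra]. }
  apply Rmult_lt_0_compat; [apply sqrt_lt_R0; lra | lra].
Qed.
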